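(* Let $G=(V,E)$ be a finite graph, $B \subset U \subset V$, and let $f$ be an $\mathcal F_B$-measurable function on $\mathcal S_V$. Let $\tilde V = V_1 \cup V_2$ be the vertex set of the disjoint union $\tilde G$ of two copies of $G$, let $\phi:\tilde V\to\tilde V$ be the natural involution exchanging each $x\in V_1$ with the corresponding vertex of $V_2$, let $U_1$ be $U$ regarded as a subset of $V_1$, and let $A = V_1 \setminus U_1$. For $\tilde\pi \in \mathcal S_{\tilde V}$ let $Q_A(\tilde\pi)$ be the minimal $\tilde\pi$-invariant set containing $A$ which is compatible with $\phi$ (i.e. $\phi(Q_A)=Q_A$). Then, regarding $B$ as a subset of $V_1$, $$\big|\mathbb E_{U}(f(\cdot\oplus\mathrm{id})) - \mathbb E_{V}(f)\big| \leq 2 \|f\|_{\infty}\, \mathbb P_{\tilde V}\big(Q_A \cap B \neq \emptyset \,\big|\, \tilde\pi|_A = \mathrm{id}\big).$$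
   Context: For any finite graph with vertex set $W$ and $U\subset W$, $\mathcal S_U$ is the set of bijections $\pi:U\to U$ with $\pi(x)=x$ or $\{x,\pi(x)\}$ an edge; $\mathbb P_U(\pi)=e^{-\alpha\sum_{x\in U}\mathbb 1\{\pi(x)\neq x\}}/Z(U)$, $\mathbb E_U$ its expectation. For $B\subset V$, $\mathcal F_B$ is the $\sigma$-algebra on $\mathcal S_V$ generated by the values $\pi(x),\pi^{-1}(x)$, $x\in B$. $\pi\oplus\mathrm{id}$ is the extension of $\pi\in\mathcal S_U$ by the identity outside $U$. A set $D$ is $\tilde\pi$-invariant if $\tilde\pi(D)=D$; such a minimal set $Q_A$ exists since intersections of $\tilde\pi$-invariant, $\phi$-compatible sets containing $A$ retain these properties. *)

From HB Require Import structures.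
From mathcomp Require Import all_boot all_order all_algebra all_fingroup.
From mathcomp Require Import reals sequences exp.
Set Implicit Arguments. Unset Strict Implicit. Unset Printing Implicit Defensive.
Import Order.TTheory GRing.Theory Num.Theory.
Local Open Scope ring_scope.

(* A finite graph is a symmetric irreflexive relation e on a finType T
   (vertex set V = all of T). *)

Section Defs.
Variable R : realType.
Variable T : finType.
Variable e : rel T.

(* S_U, represented through the extension pi ⊕ id: permutations of V fixing
   every vertex outside U and moving each vertex either to itself or to a
   neighbour. *)
Definition Sset (U : {set T}) : {set {perm T}} :=
  [set p : {perm T} | [forall x, (x \notin U) ==> (p x == x)]
                      && [forall x, (p x == x) || e x (p x)]].

Definition wt (alpha : R) (U : {set T}) (p : {perm T}) : R :=
  expR (- alpha * (#|[set x in U | p x != x]|)%:R).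

Definition Zpart (alpha : R) (U : {set T}) : R :=
  \sum_(p in Sset U) wt alpha U p.

Definition Prob (alpha : R) (U : {set T}) (p : {perm T}) : R :=
  wt alpha U p / Zpart alpha U.

Definition Expect (alpha : R) (U : {set T}) (f : {perm T} -> R) : R :=
  \sum_(p in Sset U) Prob alpha U p * f p.

Definition PrEv (alpha : R) (U : {set T}) (E : pred {perm T}) : R :=
  \sum_(p in Sset U | E p) Prob alpha U p.

Definition CondPr (alpha : R) (U : {set T}) (E C : pred {perm T}) : R :=
  PrEv alpha U (predI E C) / PrEv alpha U C.

(* f is F_B-measurable on S_V: f is a function of the values
   pi(x), pi^{-1}(x), x in B, on S_V (the sigma-algebra on the finite set S_V
   generated by these maps). *)
Definition FB_measurable (B : {set T}) (f : {perm T} -> R) : Prop :=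
  forall p q : {perm T}, p \in Sset setT -> q \in Sset setT ->
    (forall x, x \in B -> p x = q x /\ (p^-1)%g x = (q^-1)%g x) -> f p = f q.

Definition supnorm (f : {perm T} -> R) : R :=
  \big[Num.max/0]_(p in Sset setT) `|f p|.

End Defs.

(* Disjoint union of two copies of the graph: V1 = inl, V2 = inr. *)
Definition edge2 (T : finType) (e : rel T) : rel (T + T)%type :=
  fun a b => match a, b with
             | inl x, inl y => e x y
             | inr x, inr y => e x y
             | _, _ => false
             end.

Definition phi (T : finType) (a : (T + T)%type) : (T + T)%type :=
  match a with inl x => inr x | inr x => inl x end.

Definition QA (T : finType) (A : {set (T + T)%type}) (p : {perm (T + T)%type})
  : {set (T + T)%type} :=
  \bigcap_(D : {set (T + T)%type} |
             [&& A \subset D, (p @: D == D)%SET & (@phi T @: D == D)%SET]) D.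

From HB Require Import structures.
From mathcomp Require Import all_boot all_order all_algebra all_fingroup.
From mathcomp Require Import reals sequences exp ring.
Import Order.TTheory GRing.Theory Num.Theory.
Local Open Scope ring_scope.
Set Implicit Arguments. Unset Strict Implicit. Unset Printing Implicit Defensive.

(* Conditioned on fixing A = inl @: ~: U pointwise, a configuration
   p of the doubled graph is a pair (perm_l p, perm_r p) of an S_U-configuration
   on the first copy and an S_V-configuration on the second, and its weight is
   the product of theirs; hence E_U f - E_V f is the conditional mean of
   f (perm_l p) - f (perm_r p).  Exchanging the two copies outside Q_A(p) is a
   weight-preserving involution of the conditioned configurations that fixes
   Q_A(p).  When Q_A(p) avoids B, it maps p to a configuration whose first copy
   agrees with perm_r p on B (values and preimages), so by F_B-measurability
   these terms cancel in pairs.  Each remaining term, where Q_A(p) meets B, is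
   at most 2 ||f||_oo. *)

Lemma imset_stable (aT : finType) (g : aT -> aT) (D : {set aT}) :
  injective g -> {in D, forall x, g x \in D} -> g @: D = D.
Proof.
move=> g_inj gD; apply/eqP; rewrite eqEcard card_imset // leqnn andbT.
by apply/subsetP=> _ /imsetP[x xD ->]; apply: gD.
Qed.

Section PermOrId.
Variable aT : finType.

Definition perm_or1_fun (g : aT -> aT) x := if injectiveb g then g x else x.

Lemma perm_or1_fun_inj g : injective (perm_or1_fun g).
Proof. by rewrite /perm_or1_fun; case: injectiveP => [g_inj|_] x y // /g_inj. Qed.

(* The identity when [g] is not injective. *)
Definition perm_or1 g : {perm aT} := perm (@perm_or1_fun_inj g).

Lemma perm_or1E g : injective g -> perm_or1 g =1 g.
Proof. by move=> g_inj x; rewrite permE /perm_or1_fun; case: injectiveP. Qed.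

End PermOrId.

Section MinimalInvariantSet.
Variable T : finType.
Local Notation W := (T + T)%type.
Implicit Types (p : {perm W}) (D : {set W}).

Lemma phiK : involutive (@phi T). Proof. by case. Qed.
Lemma phi_inj : injective (@phi T). Proof. exact: inv_inj phiK. Qed.

Definition phi_perm : {perm W} := perm phi_inj.

Definition phi_conj p : {perm W} := (phi_perm * p * phi_perm)%g.

Lemma phi_conjE p a : phi_conj p a = phi (p (phi a)).
Proof. by rewrite !permM !permE. Qed.

Variable A : {set W}.

Definition QA_admissible p D :=
  [&& A \subset D, (p @: D == D)%SET & (@phi T @: D == D)%SET].

Lemma QA_min p D : QA_admissible p D -> QA A p \subset D.
Proof. exact: bigcap_inf. Qed.

Lemma QA_admissible_QA p : QA_admissible p (QA A p).
Proof.
have stable (g : W -> W) : injective g ->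
    (forall D, QA_admissible p D -> g @: D = D) -> g @: QA A p = QA A p.
  move=> g_inj gD; apply: imset_stable g_inj _ => x /bigcapP xQ.
  by apply/bigcapP => D admD; rewrite -(gD D admD) imset_f // xQ.
apply/and3P; split; first by apply/bigcapsP => D /and3P[].
- by rewrite stable //; [exact: perm_inj | move=> D /and3P[_ /eqP]].
- by rewrite stable //; [exact: phi_inj | move=> D /and3P[_ _ /eqP]].
Qed.

Lemma sub_QA p : A \subset QA A p.
Proof. by case/and3P: (QA_admissible_QA p). Qed.

Lemma mem_QA_perm p a : (p a \in QA A p) = (a \in QA A p).
Proof.
case/and3P: (QA_admissible_QA p) => _ /eqP pQ _.
by rewrite -{1}pQ mem_imset //; exact: perm_inj.
Qed.

Lemma mem_QA_phi p a : (phi a \in QA A p) = (a \in QA A p).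
Proof.
case/and3P: (QA_admissible_QA p) => _ _ /eqP phiQ.
by rewrite -{1}phiQ mem_imset //; exact: phi_inj.
Qed.

Lemma mem_QA_phi_conj p a : (phi_conj p a \in QA A p) = (a \in QA A p).
Proof. by rewrite phi_conjE mem_QA_phi mem_QA_perm mem_QA_phi. Qed.

Definition swap_out_fun p a := if a \in QA A p then p a else phi_conj p a.

Lemma swap_out_fun_inj p : injective (swap_out_fun p).
Proof.
have memQ a : (swap_out_fun p a \in QA A p) = (a \in QA A p).
  by rewrite /swap_out_fun; case: ifP; rewrite (mem_QA_perm, mem_QA_phi_conj).
move=> a b eq_ab; have := memQ a; rewrite eq_ab memQ.
by move: eq_ab; rewrite /swap_out_fun; do 2!case: ifP => _ //; move=> /perm_inj.
Qed.

Definition swap_out p : {perm W} := perm (@swap_out_fun_inj p).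

Lemma swap_out_in p a : a \in QA A p -> swap_out p a = p a.
Proof. by move=> aQ; rewrite permE /swap_out_fun aQ. Qed.

Lemma swap_out_notin p a : a \notin QA A p -> swap_out p a = phi_conj p a.
Proof. by move=> aQ; rewrite permE /swap_out_fun (negbTE aQ). Qed.

Lemma QA_swap_out p : QA A (swap_out p) = QA A p.
Proof.
have swapQ D : D \subset QA A p -> swap_out p @: D = p @: D.
  by move=> /subsetP DQ; apply: eq_in_imset => a /DQ /swap_out_in.
case/and3P: (QA_admissible_QA p) => AQ pQ phiQ.
case/and3P: (QA_admissible_QA (swap_out p)) => AQ' sQ' phiQ'.
have sub : QA A (swap_out p) \subset QA A p.
  by apply: QA_min; rewrite /QA_admissible AQ swapQ ?pQ.
apply/eqP; rewrite eqEsubset sub QA_min //.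
by rewrite /QA_admissible AQ' -swapQ ?sQ'.
Qed.

Lemma swap_outK p : swap_out (swap_out p) = p.
Proof.
apply/permP => a; have [aQ | aQ] := boolP (a \in QA A p).
  by rewrite swap_out_in ?QA_swap_out // swap_out_in.
rewrite swap_out_notin ?QA_swap_out // phi_conjE swap_out_notin ?mem_QA_phi //.
by rewrite phi_conjE !phiK.
Qed.

Lemma swap_out_inj : injective swap_out.
Proof. exact: can_inj swap_outK. Qed.

Lemma card_moved_swap_out p :
  #|[set a in setT | swap_out p a != a]| = #|[set a in setT | p a != a]|.
Proof.
set Q := QA A p.
rewrite -(cardsID Q [set a in setT | swap_out p a != a]).
rewrite -(cardsID Q [set a in setT | p a != a]); congr (_ + _)%N.
  apply: eq_card => a; rewrite !inE.
  by case: (boolP (a \in Q)) => aQ; rewrite ?andbF // swap_out_in.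
rewrite -[RHS](card_imset _ phi_inj) (can2_imset_pre _ phiK phiK).
apply: eq_card => a; rewrite !inE mem_QA_phi; case: (boolP (a \in Q)) => //= aQ.
by rewrite swap_out_notin // phi_conjE (can2_eq phiK phiK).
Qed.

End MinimalInvariantSet.

Arguments phiK {T}.
Arguments phi_inj {T}.

Lemma in_SsetT (aT : finType) (r : rel aT) (s : {perm aT}) :
  (s \in Sset r setT) = [forall x, (s x == x) || r x (s x)].
Proof.
rewrite inE; have -> // : [forall x, (x \notin [set: aT]) ==> (s x == x)].
by apply/forallP => x; rewrite in_setT.
Qed.

Lemma in_Sset (aT : finType) (r : rel aT) (U : {set aT}) (s : {perm aT}) :
  (s \in Sset r U) = [forall x, (x \notin U) ==> (s x == x)] && (s \in Sset r setT).
Proof. by rewrite in_SsetT inE. Qed.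

Lemma Sset_subT (aT : finType) (r : rel aT) (U : {set aT}) :
  Sset r U \subset Sset r setT.
Proof. by apply/subsetP => s; rewrite in_Sset => /andP[]. Qed.

Section TwoCopies.
Variables (T : finType) (e : rel T).
Local Notation W := (T + T)%type.
Local Notation S := (Sset (edge2 e) setT).
Implicit Types (p : {perm W}) (s : {perm T}).

Lemma edge2_phi a b : edge2 e (phi a) (phi b) = edge2 e a b.
Proof. by case: a; case: b. Qed.

Lemma phi_conj_S p : p \in S -> phi_conj p \in S.
Proof.
rewrite !in_SsetT => /forallP pS; apply/forallP => a.
by rewrite phi_conjE -edge2_phi phiK (can2_eq phiK phiK) pS.
Qed.

Lemma S_inl p x : p \in S -> exists y, p (inl x) = inl y.
Proof.
rewrite in_SsetT => /forallP /(_ (inl x)).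
by case: (p (inl x)) => [y|y] //; exists y.
Qed.

Definition perm_l p : {perm T} :=
  perm_or1 (fun x => if p (inl x) is inl y then y else x).

Lemma perm_lE p x : p \in S -> p (inl x) = inl (perm_l p x).
Proof.
move=> pS; have pl y : p (inl y) = inl (if p (inl y) is inl z then z else y).
  by have [z ->] := S_inl y pS.
rewrite perm_or1E -?pl // => y z eq_yz.
by apply: (@inl_inj _ T); apply: (@perm_inj _ p); rewrite pl eq_yz -pl.
Qed.

Definition perm_r p : {perm T} := perm_l (phi_conj p).

Lemma perm_rE p x : p \in S -> p (inr x) = inr (perm_r p x).
Proof.
by move=> /phi_conj_S /(perm_lE x); rewrite phi_conjE => /(congr1 (@phi T)); rewrite phiK.
Qed.

Definition glue_fun s1 s2 (a : W) : W :=
  match a with inl x => inl (s1 x) | inr x => inr (s2 x) end.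

Lemma glue_fun_inj s1 s2 : injective (glue_fun s1 s2).
Proof. by case=> x [] y //= [] /perm_inj ->. Qed.

Definition glue s1 s2 : {perm W} := perm (@glue_fun_inj s1 s2).

Lemma glueE s1 s2 a : glue s1 s2 a = glue_fun s1 s2 a.
Proof. exact: permE. Qed.

Lemma phi_conj_glue s1 s2 : phi_conj (glue s1 s2) = glue s2 s1.
Proof. by apply/permP => -[] x; rewrite phi_conjE !glueE. Qed.

Lemma perm_l_glue s1 s2 : perm_l (glue s1 s2) = s1.
Proof.
apply/permP => x; rewrite perm_or1E => [|y z]; rewrite ?glueE //=.
by move/perm_inj.
Qed.

Lemma perm_r_glue s1 s2 : perm_r (glue s1 s2) = s2.
Proof. by rewrite /perm_r phi_conj_glue perm_l_glue. Qed.

Lemma glue_perm_lr p : p \in S -> glue (perm_l p) (perm_r p) = p.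
Proof. by move=> pS; apply/permP => -[] x; rewrite glueE /= (perm_lE, perm_rE). Qed.

Lemma swap_out_S A p : p \in S -> swap_out A p \in S.
Proof.
move=> pS; move: (pS) (phi_conj_S pS); rewrite !in_SsetT => /forallP pS' /forallP cS.
apply/forallP => a; have [aQ|aQ] := boolP (a \in QA A p).
  by rewrite swap_out_in //; apply: pS'.
by rewrite swap_out_notin //; apply: cS.
Qed.

Lemma mem_QA_perm_r (A : {set W}) p y :
  p \in S -> (inl (perm_r p y) \in QA A p) = (inl y \in QA A p).
Proof.
by move=> /phi_conj_S /(perm_lE y) <-; rewrite mem_QA_phi_conj.
Qed.

Lemma perm_l_swap_out (A : {set W}) p y :
  p \in S -> inl y \notin QA A p ->
  perm_l (swap_out A p) y = perm_r p y.
Proof.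
move=> pS yQ; apply: (@inl_inj _ T).
by rewrite -(perm_lE y (swap_out_S A pS)) swap_out_notin // (perm_lE y (phi_conj_S pS)).
Qed.

End TwoCopies.

Section GibbsMeasure.
Variables (R : realType) (T : finType) (e : rel T) (alpha : R).

Lemma Zpart_gt0 (U : {set T}) : 0 < Zpart e alpha U.
Proof.
have id_in : (1%g : {perm T}) \in Sset e U.
  by rewrite inE; apply/andP; split; apply/forallP => x; rewrite perm1 eqxx ?implybT.
rewrite /Zpart (bigD1 1%g) //= ltr_pwDl ?expR_gt0 //.
by apply: sumr_ge0 => s _; exact: expR_ge0.
Qed.

Lemma ExpectE (U : {set T}) (f : {perm T} -> R) :
  Expect e alpha U f = (\sum_(s in Sset e U) wt alpha U s * f s) / Zpart e alpha U.
Proof. by rewrite /Expect /Prob mulr_suml; apply: eq_bigr => s _; rewrite mulrAC. Qed.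

Lemma wt_Sset (U : {set T}) (s : {perm T}) : s \in Sset e U ->
  wt alpha U s = wt alpha setT s.
Proof.
rewrite in_Sset => /andP[/forallP fixU _]; congr (expR (_ * _%:R)).
apply: eq_card => x; rewrite !inE; case: (boolP (x \in U)) => //= xU.
by rewrite (implyP (fixU x) xU).
Qed.

Lemma le_supnorm (f : {perm T} -> R) (s : {perm T}) :
  s \in Sset e setT -> `|f s| <= supnorm e f.
Proof. by move=> sS; rewrite /supnorm; exact: le_bigmax_cond. Qed.

End GibbsMeasure.

Section Coupling.
Variables (R : realType) (T : finType) (e : rel T) (alpha : R) (U : {set T}).
Local Notation W := (T + T)%type.
Local Notation S := (Sset (edge2 e) setT).
Local Notation A := ((@inl T T) @: (~: U)).
Local Notation w := (wt alpha (setT : {set W})).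
Implicit Types (p : {perm W}) (s : {perm T}).

Definition fixA p := [forall a in A, p a == a].

Definition SfixA : {set {perm W}} := [set p in S | fixA p].

Lemma glue_S s1 s2 :
  (glue s1 s2 \in S) = (s1 \in Sset e setT) && (s2 \in Sset e setT).
Proof.
rewrite !in_SsetT; apply/forallP/andP => [gS | [/forallP s1S /forallP s2S] [] x].
- by split; apply/forallP => x; [have := gS (inl x) | have := gS (inr x)]; rewrite glueE.
- by rewrite glueE /=; apply: s1S.
- by rewrite glueE /=; apply: s2S.
Qed.

Lemma fixA_glue s1 s2 :
  fixA (glue s1 s2) = [forall x, (x \notin U) ==> (s1 x == x)].
Proof.
apply/forall_inP/forallP => [fix1 x | fix1 _ /imsetP[x xU ->]].
  apply/implyP => xU; have := fix1 (inl x); rewrite glueE imset_f ?inE //.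
  by move=> /(_ isT).
by move: xU; rewrite inE glueE /= => /(implyP (fix1 x)) /eqP ->.
Qed.

Lemma glue_SfixA s1 s2 :
  (glue s1 s2 \in SfixA) = (s1 \in Sset e U) && (s2 \in Sset e setT).
Proof. by rewrite inE glue_S fixA_glue (in_Sset _ U) andbC andbA. Qed.

Lemma SfixA_subS : SfixA \subset S.
Proof. by apply/subsetP => p; rewrite inE => /andP[]. Qed.

Lemma perm_lr_SfixA p :
  p \in SfixA -> (perm_l p \in Sset e U) && (perm_r p \in Sset e setT).
Proof. by move=> pC; rewrite -glue_SfixA (glue_perm_lr (subsetP SfixA_subS _ pC)). Qed.

Lemma sum_SfixA (G : {perm W} -> R) :
  \sum_(p in SfixA) G p =
  \sum_(s1 in Sset e U) \sum_(s2 in Sset e setT) G (glue s1 s2).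
Proof.
rewrite pair_big_dep /= (reindex (fun s : {perm T} * {perm T} => glue s.1 s.2)) /=.
  by apply: eq_bigl => -[s1 s2]; rewrite glue_SfixA.
exists (fun p => (perm_l p, perm_r p)) => [[s1 s2] _ | p pC] /=.
  by rewrite perm_l_glue perm_r_glue.
by rewrite (glue_perm_lr (subsetP SfixA_subS _ pC)).
Qed.

Lemma card_moved_glue s1 s2 :
  #|[set a in setT | glue s1 s2 a != a]| =
  (#|[set x in setT | s1 x != x]| + #|[set x in setT | s2 x != x]|)%N.
Proof.
rewrite -!sum1_card big_sumType /=.
by congr (_ + _)%N; apply: eq_bigl => x; rewrite !inE glueE.
Qed.

Lemma wt_glue s1 s2 : w (glue s1 s2) = wt alpha setT s1 * wt alpha setT s2.
Proof. by rewrite /wt card_moved_glue natrD mulrDr expRD. Qed.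

Lemma Expect_sub_coupling (f : {perm T} -> R) :
  Expect e alpha U f - Expect e alpha setT f =
  (\sum_(p in SfixA) w p * (f (perm_l p) - f (perm_r p))) / \sum_(p in SfixA) w p.
Proof.
have sum_glue (F : {perm T} -> {perm T} -> R) :
    \sum_(p in SfixA) w p * F (perm_l p) (perm_r p) =
    \sum_(s1 in Sset e U) \sum_(s2 in Sset e setT)
      wt alpha U s1 * wt alpha setT s2 * F s1 s2.
  rewrite sum_SfixA; apply: eq_bigr => s1 s1U; apply: eq_bigr => s2 _.
  by rewrite wt_glue perm_l_glue perm_r_glue (wt_Sset _ s1U).
have mul_sums (F G : {perm T} -> R) :
    (\sum_(s1 in Sset e U) F s1) * (\sum_(s2 in Sset e setT) G s2) =
    \sum_(s1 in Sset e U) \sum_(s2 in Sset e setT) F s1 * G s2.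
  by rewrite mulr_suml; apply: eq_bigr => s1 _; rewrite mulr_sumr.
rewrite (sum_glue (fun s1 s2 => f s1 - f s2)).
rewrite (eq_bigr _ (fun p _ => esym (mulr1 (w p)))) (sum_glue (fun _ _ => 1)).
under [X in _ / X]eq_bigr do under eq_bigr do rewrite mulr1.
rewrite -mul_sums [X in X / _](_ : _ =
    (\sum_(s in Sset e U) wt alpha U s * f s) * Zpart e alpha setT -
    Zpart e alpha U * \sum_(s in Sset e setT) wt alpha setT s * f s).
  have := Zpart_gt0 e alpha U; have := Zpart_gt0 e alpha setT.
  by rewrite !ExpectE /Zpart => ZV_gt0 ZU_gt0; field; rewrite !gt_eqF.
rewrite /Zpart !mul_sums -sumrB; apply: eq_bigr => s1 _.
by rewrite -sumrB; apply: eq_bigr => s2 _; ring.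
Qed.

Lemma swap_out_SfixA p : (swap_out A p \in SfixA) = (p \in SfixA).
Proof.
suff swapC q : q \in SfixA -> swap_out A q \in SfixA.
  by apply/idP/idP => [/swapC|/swapC //]; rewrite swap_outK.
rewrite inE => /andP[qS /forall_inP qA]; rewrite inE swap_out_S //=.
by apply/forall_inP => a aA; rewrite swap_out_in ?qA // (subsetP (sub_QA _ _)).
Qed.

Lemma wt_swap_out p : w (swap_out A p) = w p.
Proof. by rewrite /wt card_moved_swap_out. Qed.

Lemma perm_l_swap_out_agree (B : {set T}) p x :
  p \in S -> QA A p :&: inl @: B == set0 -> x \in B ->
  perm_l (swap_out A p) x = perm_r p x /\
  (perm_l (swap_out A p))^-1%g x = (perm_r p)^-1%g x.
Proof.
move=> pS /eqP QB0 xB.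
have outQ y : y \in B -> inl y \notin QA A p.
  by move=> yB; apply/negP => yQ; move/setP/(_ (inl y)): QB0; rewrite !inE yQ imset_f.
split; first by rewrite (perm_l_swap_out pS) // outQ.
set y := (perm_r p)^-1%g x.
have yQ : inl y \notin QA A p by rewrite -(mem_QA_perm_r _ _ pS) permKV outQ.
by rewrite -[in LHS](permKV (perm_r p) x) -/y -(perm_l_swap_out pS yQ) permK.
Qed.

Lemma sum_swap_out_cancel (B : {set T}) (f : {perm T} -> R) :
  FB_measurable e B f ->
  \sum_(p in SfixA | QA A p :&: inl @: B == set0)
    w p * (f (perm_l p) - f (perm_r p)) = 0.
Proof.
move=> f_meas; under eq_bigr do rewrite mulrBr.
rewrite sumrB; apply/eqP; rewrite subr_eq0; apply/eqP.
rewrite (reindex_inj (@swap_out_inj _ A)) /=.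
apply: eq_big => p; first by rewrite swap_out_SfixA QA_swap_out.
rewrite QA_swap_out => /andP[sC QB0].
have pC : p \in SfixA by rewrite -swap_out_SfixA.
rewrite wt_swap_out; congr (_ * _); apply: f_meas.
- by case/andP: (perm_lr_SfixA sC) => /(subsetP (Sset_subT _ _)).
- by case/andP: (perm_lr_SfixA pC).
- by move=> x; apply: perm_l_swap_out_agree; rewrite ?(subsetP SfixA_subS).
Qed.

Lemma CondPr_fixA (E : pred {perm W}) :
  CondPr (edge2 e) alpha setT E fixA =
  (\sum_(p in SfixA | E p) w p) / \sum_(p in SfixA) w p.
Proof.
rewrite /CondPr /PrEv /Prob -!mulr_suml.
have Z_gt0 := Zpart_gt0 (edge2 e) alpha setT.
have -> : \sum_(p in S | predI E fixA p) w p = \sum_(p in SfixA | E p) w p.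
  by apply: eq_bigl => p; rewrite [in RHS]inE /= -andbA (andbC (E p)).
have -> : \sum_(p in S | fixA p) w p = \sum_(p in SfixA) w p.
  by apply: eq_bigl => p; rewrite [in RHS]inE.
by rewrite invf_div mulrA divfK // gt_eqF.
Qed.

Lemma norm_sum_diff_le (P : pred {perm W}) (f : {perm T} -> R) :
  `|\sum_(p in SfixA | P p) w p * (f (perm_l p) - f (perm_r p))|
    <= 2 * supnorm e f * \sum_(p in SfixA | P p) w p.
Proof.
rewrite mulr_sumr; apply: le_trans (ler_norm_sum _ _ _) _.
apply: ler_sum => p /andP[/perm_lr_SfixA /andP[pl pr] _].
rewrite normrM ger0_norm ?expR_ge0 // mulrC ler_wpM2r ?expR_ge0 //.
rewrite mulr_natl mulr2n (le_trans (ler_normB _ _)) // lerD ?le_supnorm //.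
exact: (subsetP (Sset_subT _ _) _ pl).
Qed.

End Coupling.

Theorem proposition4p3 (R : realType) (T : finType) (e : rel T)
  (e_sym : symmetric e) (e_irr : irreflexive e)
  (alpha : R) (U B : {set T}) (BU : B \subset U)
  (f : {perm T} -> R) (fmeas : FB_measurable e B f) :
  let A : {set (T + T)%type} := (@inl T T) @: (~: U) in
  `| Expect e alpha U f - Expect e alpha setT f |
    <= 2 * supnorm e f *
       CondPr (edge2 e) alpha setT
         (fun p => QA A p :&: ((@inl T T) @: B) != set0)
         (fun p => [forall x in A, p x == x]).
Proof.
cbv zeta; rewrite Expect_sub_coupling CondPr_fixA.
rewrite (bigID (fun p => QA (inl @: ~: U) p :&: inl @: B == set0)) /=.
rewrite sum_swap_out_cancel // add0r.
have w_ge0 : 0 <= (\sum_(p in SfixA e U) wt alpha setT p)^-1.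
  by rewrite invr_ge0 sumr_ge0 // => p _; exact: expR_ge0.
by rewrite normrM mulrA (ger0_norm w_ge0) ler_wpM2r // norm_sum_diff_le.
Qed.
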